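(* Let $n$ be even and $F\colon\mathbb F_2^n\to\mathbb F_2^n$ a quadratic APN function with associated $\mathcal V_F=\{V_b\colon b\in\mathbb F_2^n\setminus\{0\},\ \dim(V_b)\ge1\}$. Then $\dim(V_b)$ is even for every $V_b\in\mathcal V_F$.
   Context: $\langle\cdot,\cdot\rangle$ is the standard dot product. $F$ is APN if for every $a\ne0$ and $c$, $F(x)+F(x+a)=c$ has at most 2 solutions; quadratic if each component $x\mapsto\langle b,F(x)\rangle$ is a quadratic form plus an affine function. With $D_{F,a}(x)=F(x)+F(x+a)$, $H_b=\{x:\langle b,x\rangle=0\}$, $\overline{H_b}=\{x:\langle b,x\rangle=1\}$: $T_b=\{a:\mathrm{Im}(D_{F,a})=H_b\}\cup\{0\}$, $\overline{T_b}=\{a:\mathrm{Im}(D_{F,a})=\overline{H_b}\}$, $V_b=T_b\cup\overline{T_b}$ (a linear subspace). *)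

From HB Require Import structures.
From mathcomp Require Import all_boot all_order all_algebra.
Set Implicit Arguments. Unset Strict Implicit. Unset Printing Implicit Defensive.
Import GRing.Theory.
Local Open Scope ring_scope.

Notation vecF2 n := 'rV['F_2]_n.

Definition dot n (b x : vecF2 n) : 'F_2 := \sum_(i < n) b 0 i * x 0 i.

Definition qform n (Q : 'M['F_2]_n) (x : vecF2 n) : 'F_2 :=
  \sum_(i < n) \sum_(j < n) Q i j * x 0 i * x 0 j.

Definition quadratic n (F : vecF2 n -> vecF2 n) : Prop :=
  forall b : vecF2 n, exists (Q : 'M['F_2]_n) (c : vecF2 n) (d : 'F_2),
    forall x, dot b (F x) = qform Q x + dot c x + d.

Definition Der n (F : vecF2 n -> vecF2 n) (a x : vecF2 n) : vecF2 n := F x + F (x + a).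

Definition APN n (F : vecF2 n -> vecF2 n) : Prop :=
  forall a c : vecF2 n, a != 0 -> (#|[set x | Der F a x == c]| <= 2)%N.

Definition ImD n (F : vecF2 n -> vecF2 n) (a : vecF2 n) : {set vecF2 n} :=
  [set Der F a x | x in [set: vecF2 n]].

Definition Hb n (b : vecF2 n) : {set vecF2 n} := [set x | dot b x == 0].
Definition Hbbar n (b : vecF2 n) : {set vecF2 n} := [set x | dot b x == 1].

Definition Tb n (F : vecF2 n -> vecF2 n) (b : vecF2 n) : {set vecF2 n} :=
  [set a | ImD F a == Hb b] :|: [set 0].
Definition Tbbar n (F : vecF2 n -> vecF2 n) (b : vecF2 n) : {set vecF2 n} :=
  [set a | ImD F a == Hbbar b].
Definition Vb n (F : vecF2 n -> vecF2 n) (b : vecF2 n) : {set vecF2 n} :=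
  Tb F b :|: Tbbar F b.

(* dimension of V_b (a linear subspace): dimension of its span *)
Definition dimVb n (F : vecF2 n -> vecF2 n) (b : vecF2 n) : nat :=
  \dim <<enum (Vb F b)>>%VS.

(* For b <> 0 write the component x |-> <b, F x> as q(x) + <c, x> + d with q a
   quadratic form and B its polar form. Then <b, D_a F(x)> = B(x, a) + const, so
   the image of D_a F lies in one coset of H_b exactly when a is in the radical
   of B; since F is APN that image has at least 2^(n-1) points, hence it is then
   the whole coset and V_b is the radical. For a suitable l, substituting
   y = x + a in the square of the Walsh sum W = sum_x (-1)^(q(x) + <l, x>) gives
   W^2 = 2^n |rad B| = 2^(n + dim V_b), so n + dim V_b is even. *)

From HB Require Import structures.
From mathcomp Require Import all_boot all_order all_algebra.
From mathcomp Require Import finfield ring zify.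
Import GRing.Theory Num.Theory.
Local Open Scope ring_scope.
Set Implicit Arguments. Unset Strict Implicit.

Lemma F2_cases (z : 'F_2) : z = 0 \/ z = 1.
Proof. by case: z => [[|[|k]]] // ?; [left | right]; apply: val_inj. Qed.

Lemma F2_mulrn2 (z : 'F_2) : z *+ 2 = 0.
Proof. by rewrite -mulr_natr pchar_Fp_0 ?mulr0. Qed.

Lemma F2V_addrK (V : lmodType 'F_2) (v w : V) : v + w + w = v.
Proof. by rewrite -addrA -mulr2n -scaler_nat pchar_Fp_0 ?scale0r ?addr0. Qed.

Definition sgF2 (z : 'F_2) : int := (-1) ^+ z.

Lemma sgF2_1 : sgF2 1 = -1. Proof. by []. Qed.

Lemma sgF2D z w : sgF2 (z + w) = sgF2 z * sgF2 w.
Proof. by case: (F2_cases z) => ->; case: (F2_cases w) => ->. Qed.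

Lemma card_vecF2 n : #|{: vecF2 n}| = (2 ^ n)%N.
Proof. by rewrite card_mx card_Fp // mul1n. Qed.

Lemma card_le_imset_mul (aT rT : finType) (f : aT -> rT) k :
  (forall y, #|[set x | f x == y]| <= k)%N ->
  (#|aT| <= #|[set f x | x in [set: aT]]| * k)%N.
Proof.
move=> fiber_le; rewrite -cardsT -sum1_card (partition_big_imset f) /=.
rewrite -sum_nat_const; apply: leq_sum => y _.
apply: leq_trans (fiber_le y); rewrite sum1_card.
by apply/subset_leq_card/subsetP => x /andP [_]; rewrite inE.
Qed.

Section DotProduct.
Variable n : nat.
Implicit Types (b c x y : vecF2 n) (e : 'F_2).

Lemma dotDr b x y : dot b (x + y) = dot b x + dot b y.
Proof. by rewrite /dot -big_split; apply: eq_bigr => i _; rewrite mxE mulrDr. Qed.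

Lemma dotDl b c x : dot (b + c) x = dot b x + dot c x.
Proof. by rewrite /dot -big_split; apply: eq_bigr => i _; rewrite mxE mulrDl. Qed.

Lemma dotC b x : dot b x = dot x b.
Proof. by apply: eq_bigr => i _; rewrite mulrC. Qed.

Lemma dot0r b : dot b 0 = 0.
Proof. by apply: big1 => i _; rewrite mxE mulr0. Qed.

Lemma dot_delta i x : dot (delta_mx 0 i) x = x 0 i.
Proof.
rewrite /dot (bigD1 i) //= big1 => [|j /negbTE ji].
  by rewrite mxE !eqxx mul1r addr0.
by rewrite mxE ji andbF mul0r.
Qed.

Lemma forall_dot_eq0 x : [forall b, dot b x == 0] = (x == 0).
Proof.
apply/forallP/eqP => [x_ortho | -> b]; last by rewrite dot0r.
by apply/rowP => i; rewrite mxE -dot_delta; apply/eqP.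
Qed.

Lemma card_dot_fiber b e : b != 0 -> (#|[set x | dot b x == e]| * 2 = 2 ^ n)%N.
Proof.
rewrite -forall_dot_eq0 => /forallPn [x0]; rewrite dotC.
case: (F2_cases (dot b x0)) => [-> // | bx0] _.
pose A e := [set x | dot b x == e].
have A1 : A 1 = [set x + x0 | x in A 0].
  apply/setP => y; rewrite inE; apply/eqP/imsetP => [by1 | [x]].
    by exists (y + x0); rewrite ?F2V_addrK // inE dotDr by1 bx0 -mulr2n F2_mulrn2.
  by rewrite inE => /eqP bx ->; rewrite dotDr bx bx0 add0r.
have A1C : A 1 = ~: A 0.
  by apply/setP => y; rewrite !inE; case: (F2_cases (dot b y)) => ->.
have cardA1 : #|A 1| = #|A 0| by rewrite A1 card_imset //; apply: addIr.
have := cardsC (A 0); rewrite -A1C cardA1 card_vecF2.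
by case: (F2_cases e) => ->; rewrite -[[set x | _]]/(A _) ?cardA1 muln2 -addnn.
Qed.

End DotProduct.

Section QuadraticForm.
Variables (n : nat) (Q : 'M['F_2]_n).
Implicit Types (c x y z : vecF2 n).

Definition polar x y :=
  \sum_(i < n) \sum_(j < n) Q i j * (x 0 i * y 0 j + y 0 i * x 0 j).

Definition radical : {set vecF2 n} := [set a | [forall x, polar x a == 0]].

Lemma qformD x y : qform Q (x + y) = qform Q x + qform Q y + polar x y.
Proof.
rewrite /qform /polar -!big_split; apply: eq_bigr => i _.
by rewrite -!big_split; apply: eq_bigr => j _; rewrite !mxE /=; ring.
Qed.

Lemma polarDl x y z : polar (x + y) z = polar x z + polar y z.
Proof.
rewrite /polar -!big_split; apply: eq_bigr => i _.
by rewrite -!big_split; apply: eq_bigr => j _; rewrite !mxE /=; ring.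
Qed.

Lemma polarDr x y z : polar x (y + z) = polar x y + polar x z.
Proof.
rewrite /polar -!big_split; apply: eq_bigr => i _.
by rewrite -!big_split; apply: eq_bigr => j _; rewrite !mxE /=; ring.
Qed.

Lemma polar0l x : polar 0 x = 0.
Proof.
by apply: big1 => i _; apply: big1 => j _; rewrite !mxE !(mul0r, mulr0, addr0).
Qed.

Lemma polar0r x : polar x 0 = 0.
Proof.
by apply: big1 => i _; apply: big1 => j _; rewrite !mxE !(mul0r, mulr0, addr0).
Qed.

Lemma qform0 : qform Q 0 = 0.
Proof. by apply: big1 => i _; apply: big1 => j _; rewrite !mxE !mulr0. Qed.

Lemma radical0 : 0 \in radical.
Proof. by rewrite inE; apply/forallP => x; rewrite polar0r. Qed.

Lemma radicalD : {in radical &, forall a a', a + a' \in radical}.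
Proof.
move=> a a'; rewrite !inE => /forallP a_rad /forallP a'_rad.
by apply/forallP => x; rewrite polarDr (eqP (a_rad x)) (eqP (a'_rad x)) addr0.
Qed.

Lemma radicalP a x : a \in radical -> polar x a = 0.
Proof. by rewrite inE => /forallP /(_ x) /eqP. Qed.

Lemma quadratic_der (f : vecF2 n -> 'F_2) c d :
    (forall x, f x = qform Q x + dot c x + d) ->
  forall x a, f x + f (x + a) = polar x a + (f a + f 0).
Proof.
move=> fE x a; rewrite !fE qformD dotDr qform0 dot0r !add0r.
(* the two copies of q x + <c, x> cancel in characteristic 2 *)
by rewrite -(addr0 (polar x a + _)) -(F2_mulrn2 (qform Q x + dot c x)); ring.
Qed.

End QuadraticForm.

Section CharacterSums.
Variable n : nat.

Lemma sum_sgF2_additive (S : {set vecF2 n}) (g : vecF2 n -> 'F_2) :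
    {in S &, forall x y, x + y \in S} -> {in S &, {morph g : x y / x + y}} ->
  \sum_(x in S) sgF2 (g x) = if [forall x in S, g x == 0] then #|S|%:R else 0.
Proof.
move=> addS gD; case: ifPn => [/forall_inP g0 | /forall_inPn [s0 s0S g_s0]].
  by rewrite -sumr_const; apply: eq_bigr => x /g0 /eqP ->.
have {}g_s0 : g s0 = 1 by case: (F2_cases (g s0)) g_s0 => ->.
have shiftS x : (x + s0 \in S) = (x \in S).
  by apply/idP/idP => [/addS/(_ s0S) | /addS]; rewrite ?F2V_addrK //; apply.
have : \sum_(x in S) sgF2 (g x) = - \sum_(x in S) sgF2 (g x).
  rewrite {1}(reindex_inj (addIr s0)) /= (eq_bigl _ _ shiftS) -sumrN.
  by apply: eq_bigr => x xS; rewrite gD // g_s0 sgF2D sgF2_1 mulrN1.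
lia.
Qed.

Lemma sum_sgF2_linear (g : vecF2 n -> 'F_2) : {morph g : x y / x + y} ->
  \sum_x sgF2 (g x) = if [forall x, g x == 0] then (2 ^ n)%:R else 0.
Proof.
move=> gD; have := @sum_sgF2_additive setT g (fun x y _ _ => in_setT _) (in2W gD).
rewrite cardsT card_vecF2 (eq_bigl _ _ (@in_setT _)) => ->.
by congr (if _ then _ else _); apply: eq_forallb => x; rewrite in_setT.
Qed.

End CharacterSums.

Section Walsh.
Variables (n : nat) (Q : 'M['F_2]_n).
Local Notation q := (qform Q).
Local Notation R := (radical Q).

Definition walsh (f : vecF2 n -> 'F_2) (l : vecF2 n) : int :=
  \sum_x sgF2 (f x + dot l x).

Local Notation radical_walsh l := (\sum_(a in R) sgF2 (q a + dot l a)).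

Lemma radical_walshE l :
  radical_walsh l = if [forall a in R, q a + dot l a == 0] then #|R|%:R else 0.
Proof.
apply: sum_sgF2_additive; first exact: radicalD.
by move=> a a' _ a'R /=; rewrite qformD dotDr (radicalP _ a'R) addr0 addrACA.
Qed.

Lemma sum_radical_walsh : \sum_l radical_walsh l = (2 ^ n)%:R.
Proof.
rewrite exchange_big /= (bigD1 0 (radical0 Q)) /=.
rewrite [X in _ + X]big1 => [|a /andP [_ a_neq0]].
  under eq_bigr do rewrite dot0r qform0 addr0.
  by rewrite sumr_const card_vecF2 addr0.
under eq_bigr do rewrite sgF2D.
rewrite -mulr_sumr sum_sgF2_linear => [|l l']; last by rewrite dotDl.
by rewrite forall_dot_eq0 (negbTE a_neq0) mulr0.
Qed.

Lemma walsh_sqr l : walsh q l ^+ 2 = (2 ^ n)%:R * radical_walsh l.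
Proof.
have sgF2_der x a : sgF2 (q x + dot l x) * sgF2 (q (x + a) + dot l (x + a))
    = sgF2 (polar Q x a) * sgF2 (q a + dot l a).
  rewrite -!sgF2D.
  have := quadratic_der (fun y => esym (addr0 (q y + dot l y))) x a.
  by rewrite /= qform0 dot0r !addr0 => ->.
rewrite expr2 /walsh big_distrlr /=.
under eq_bigr => x _ do rewrite (reindex_inj (addrI x)) /=.
under eq_bigr => x _ do under eq_bigr => a _ do rewrite sgF2_der.
rewrite exchange_big /= mulr_sumr [RHS]big_mkcond /=; apply: eq_bigr => a _.
rewrite -mulr_suml sum_sgF2_linear => [|x y]; last exact: polarDl.
have -> : [forall x, polar Q x a == 0] = (a \in R) by rewrite inE.
by case: ifP; rewrite ?mulr0 ?mul0r // mulrC.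
Qed.

Lemma exists_sqr_eq_card_radical : exists m, (m ^ 2 = 2 ^ n * #|R|)%N.
Proof.
have [l Wl] : exists l, radical_walsh l != 0.
  case: (pickP (fun l => radical_walsh l != 0)) => [l Wl | W0]; first by exists l.
  have := sum_radical_walsh; rewrite big1 => [|l _]; last first.
    by apply/eqP; rewrite -[_ == 0]negbK W0.
  by move/esym/eqP; rewrite pnatr_eq0 expn_eq0.
have WR : radical_walsh l = #|R|%:R.
  by move: Wl; rewrite radical_walshE; case: ifP; rewrite ?eqxx.
exists `|walsh q l|%N.
by rewrite -abszX walsh_sqr WR -natrM natz absz_nat.
Qed.

End Walsh.

Section APNComponent.
Variables (n : nat) (F : vecF2 n -> vecF2 n) (b : vecF2 n).
Hypotheses (apnF : APN F) (b_neq0 : b != 0).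

Lemma mem_ImD a x : Der F a x \in ImD F a.
Proof. exact: imset_f. Qed.

Lemma card_ImD a : a != 0 -> (2 ^ n <= #|ImD F a| * 2)%N.
Proof.
by move=> a_neq0; rewrite -card_vecF2; apply: card_le_imset_mul => c; apply: apnF.
Qed.

Lemma Vb_fiberP a : a != 0 ->
  reflect (exists e, ImD F a = [set x | dot b x == e]) (a \in Vb F b).
Proof.
move=> a_neq0; rewrite /Vb /Tb /Tbbar !inE (negbTE a_neq0) orbF.
apply: (iffP orP) => [[] /eqP -> | [e ->]]; [by exists 0 | by exists 1 |].
by case: (F2_cases e) => ->; [left | right]; apply/eqP.
Qed.

Lemma Vb_radical Q c d : (forall x, dot b (F x) = qform Q x + dot c x + d) ->
  Vb F b = radical Q.
Proof.
move=> bF.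
have derE a x : dot b (Der F a x) = polar Q x a + (dot b (F a) + dot b (F 0)).
  by rewrite dotDr; apply: quadratic_der bF x a.
apply/setP => a; have [-> | a_neq0] := eqVneq a 0.
  by rewrite radical0 /Vb /Tb !inE eqxx orbT.
apply/Vb_fiberP/idP => // [[e ImDE] | a_rad].
  have dot_ImD x : dot b (Der F a x) = e.
    by apply/eqP; have := mem_ImD a x; rewrite ImDE inE.
  rewrite inE; apply/forallP => x; apply/eqP/(addIr (dot b (F a) + dot b (F 0))).
  by rewrite -derE dot_ImD -(dot_ImD 0) derE polar0l.
exists (dot b (F a) + dot b (F 0)); apply/eqP; rewrite eqEcard; apply/andP; split.
  by apply/subsetP => _ /imsetP [x _ ->]; rewrite inE derE (radicalP _ a_rad) add0r.
by rewrite -(leq_pmul2r (_ : 0 < 2)%N) // card_dot_fiber // card_ImD.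
Qed.

End APNComponent.

Lemma mem_span_addr_closed n (A : {set vecF2 n}) :
    0 \in A -> {in A &, forall x y, x + y \in A} ->
  forall x, (x \in <<enum A>>%VS) = (x \in A).
Proof.
move=> A0 addA x; apply/idP/idP => [|xA]; last first.
  by apply: memv_span; rewrite mem_enum.
rewrite -{1}[enum A]in_tupleE => /coord_span ->.
apply: (big_ind (fun v => v \in A) A0 addA) => i _.
have vA : (enum A)`_i \in A by rewrite -mem_enum mem_nth // -cardE.
by case: (F2_cases (coord (in_tuple (enum A)) i x)) => ->; rewrite ?scale0r ?scale1r.
Qed.

Lemma card_addr_closed n (A : {set vecF2 n}) :
    0 \in A -> {in A &, forall x y, x + y \in A} ->
  #|A| = (2 ^ \dim <<enum A>>)%N.
Proof.
move=> A0 addA; transitivity #|<<enum A>>%VS|.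
  by apply: eq_card => x; rewrite mem_span_addr_closed.
by rewrite card_vspace card_Fp.
Qed.

Lemma sqr_eq_pow2_even m k : (m ^ 2 = 2 ^ k)%N -> ~~ odd k.
Proof. by move/(congr1 (logn 2)); rewrite lognX pfactorK // => <-; rewrite oddM. Qed.

Theorem mainTheorem4 (n : nat) (F : 'rV['F_2]_n -> 'rV['F_2]_n) :
  ~~ odd n -> quadratic F -> APN F ->
  forall b : 'rV['F_2]_n, b != 0 -> (1 <= dimVb F b)%N -> ~~ odd (dimVb F b).
Proof.
move=> n_even quadF apnF b b_neq0 _.
have [Q [c [d bF]]] := quadF b.
have [m m2E] := exists_sqr_eq_card_radical Q.
rewrite (card_addr_closed (radical0 Q) (@radicalD _ Q)) -expnD in m2E.
have := sqr_eq_pow2_even m2E.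
by rewrite oddD (negbTE n_even) /dimVb (Vb_radical apnF b_neq0 bF).
Qed.
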